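(* Let $Q$ be a simply-laced cluster quiver which does not contain any non-oriented full cycle. Let $S$ and $S'$ be two different sets of arrows of $Q$ such that for every full cycle $C$ of $Q$, the number of arrows of $C$ contained in $S$ and the number of arrows of $C$ contained in $S'$ have the same parity. Then the signed graph $\Sigma(q_{S'})$ can be obtained from $\Sigma(q_S)$ by a sequence of sign changes $r_{i_1},\dots,r_{i_m}$ at vertices such that each vertex is used at most once and not all vertices are used.
   Context: A cluster quiver is a finite quiver without loops and oriented 2-cycles; simply-laced means there is at most one arrow between any two vertices. A cycle is a cycle of length $\ge3$ without repeated vertices in the underlying graph; it is full if the full subquiver on its vertices contains no other arrows, and oriented if its arrows go consistently around it. A signed graph is a graph whose edges are either solid or dotted. For a set $S$ of arrows of $Q$, $\Sigma(q_S)$ is the underlying undirected graph of $Q$ in which edges coming from arrows in $S$ are dotted and all other edges are solid (it is the signed graph of the quadratic form $q_S(x)=\sum_ix_i^2+\sum_{i<j}a_{ij}x_ix_j$ with $a_{ij}=1$ for a dotted edge, $-1$ for a solid edge, $0$ otherwise). For a vertex $i$ of a signed graph $\Sigma$, the sign change $r_i(\Sigma)$ is the signed graph obtained by switching solid/dotted on every edge incident to $i$. *)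

From mathcomp Require Import all_boot.
Set Implicit Arguments. Unset Strict Implicit. Unset Printing Implicit Defensive.

(* A simply-laced quiver on a finite vertex type V is a relation [arr]:
   [arr x y] iff there is an arrow x -> y (at most one arrow per pair).
   Cluster quiver: no loops and no oriented 2-cycles. *)
Definition cluster_quiver (V : finType) (arr : rel V) : Prop :=
  (forall x, ~~ arr x x) /\ (forall x y, ~~ (arr x y && arr y x)).

Definition adj (V : finType) (arr : rel V) : rel V :=
  fun x y => arr x y || arr y x.

Definition arrow_set (V : finType) (arr : rel V) (S : {set V * V}) : Prop :=
  forall p, p \in S -> arr p.1 p.2.

Definition is_cycle (V : finType) (arr : rel V) (c : seq V) : Prop :=
  uniq c /\ 3 <= size c /\ cycle (adj arr) c.

Definition full_cycle (V : finType) (arr : rel V) (c : seq V) : Prop :=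
  forall x y, x \in c -> y \in c -> adj arr x y ->
    (y == next c x) || (x == next c y).

Definition oriented_cycle (V : finType) (arr : rel V) (c : seq V) : Prop :=
  (forall x, x \in c -> arr x (next c x)) \/
  (forall x, x \in c -> arr (next c x) x).

Definition cycle_count (V : finType) (S : {set V * V}) (c : seq V) : nat :=
  count (fun x => ((x, next c x) \in S) || ((next c x, x) \in S)) c.

(* signed graphs on V: None = no edge, Some true = dotted, Some false = solid *)
Definition signed_graph (V : finType) := {ffun V * V -> option bool}.

Definition sigma_q (V : finType) (arr : rel V) (S : {set V * V})
  : signed_graph V :=
  [ffun p => if adj arr p.1 p.2
             then Some (((p.1, p.2) \in S) || ((p.2, p.1) \in S))
             else None].

Definition sign_change (V : finType) (i : V) (G : signed_graph V)
  : signed_graph V :=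
  [ffun p => if (p.1 == i) || (p.2 == i) then omap negb (G p) else G p].

Definition sign_changes (V : finType) (s : seq V) (G : signed_graph V)
  : signed_graph V :=
  foldl (fun H i => sign_change i H) G s.

From mathcomp Require Import all_boot.
From mathcomp Require Import zify.
Set Implicit Arguments. Unset Strict Implicit. Unset Printing Implicit Defensive.

(* Let d mark the edges on which the signs of Sigma(q_S) and Sigma(q_S')
   differ. By hypothesis every full cycle carries an even number of d-edges.
   A closed walk through a repeated vertex, or a cycle with a chord, splits
   into two shorter closed walks whose d-parities add up, so every closed walk
   of the underlying graph carries an even number of d-edges. Hence d is a
   cut: with a root fixed in each connected component, the set X of vertices
   reached from their root by a walk with an odd number of d-edges does not
   depend on the walks, and an edge is a d-edge iff exactly one of its ends
   lies in X. Switching at the vertices of X turns Sigma(q_S) into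
   Sigma(q_S'), and so does switching at the complement of X, so one of the
   two misses a vertex. *)

Fixpoint walk_parity (T : Type) (d : rel T) (x : T) (p : seq T) : bool :=
  if p is y :: p' then d x y (+) walk_parity d y p' else false.

Definition cycle_parity (T : Type) (d : rel T) (c : seq T) : bool :=
  if c is x :: q then walk_parity d x (rcons q x) else false.

Section Parity.

Variables (T : Type) (d : rel T).

Lemma walk_parity_cat x p1 p2 :
  walk_parity d x (p1 ++ p2) = walk_parity d x p1 (+) walk_parity d (last x p1) p2.
Proof. by elim: p1 x => [|y p IH] x //=; rewrite IH addbA. Qed.

Lemma walk_parity_rcons x p y :
  walk_parity d x (rcons p y) = walk_parity d x p (+) d (last x p) y.
Proof. by rewrite -cats1 walk_parity_cat /= addbF. Qed.

Lemma walk_parity_addb (d' : rel T) x p :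
  walk_parity (fun a b => d a b (+) d' a b) x p =
  walk_parity d x p (+) walk_parity d' x p.
Proof. by elim: p x => [|y p IH] x //=; rewrite IH addbACA. Qed.

Lemma cycle_parity_addb (d' : rel T) c :
  cycle_parity (fun a b => d a b (+) d' a b) c =
  cycle_parity d c (+) cycle_parity d' c.
Proof. by case: c => [|x q] //=; rewrite walk_parity_addb. Qed.

Lemma cycle_parity_rcons x q : cycle_parity d (x :: q) = cycle_parity d (rcons q x).
Proof. by case: q => [|y q] //=; rewrite !walk_parity_rcons !last_rcons addbC. Qed.

Lemma cycle_parity_catC c1 c2 : cycle_parity d (c1 ++ c2) = cycle_parity d (c2 ++ c1).
Proof.
elim: c1 c2 => [|x c1 IH] c2; first by rewrite cats0.
by rewrite cat_cons cycle_parity_rcons rcons_cat IH cat_rcons.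
Qed.

Lemma cycle_parity_rot i c : cycle_parity d (rot i c) = cycle_parity d c.
Proof. by rewrite /rot cycle_parity_catC cat_take_drop. Qed.

Lemma cycle_parity_repeat w M N :
  cycle_parity d (w :: M ++ w :: N) = cycle_parity d (w :: M) (+) cycle_parity d (w :: N).
Proof. by rewrite /= rcons_cat walk_parity_cat /= (walk_parity_rcons w M) addbA. Qed.

Hypothesis d_sym : symmetric d.

Lemma walk_parity_rev x p :
  walk_parity d (last x p) (rev (belast x p)) = walk_parity d x p.
Proof.
elim: p x => [|y p IH] x //=.
rewrite rev_cons walk_parity_rcons IH d_sym addbC; congr (d x _ (+) _).
by rewrite -(last_cons y) -rev_rcons -lastI rev_cons last_rcons.
Qed.

Lemma cycle_parity_chord x A y B :
  cycle_parity d (x :: A ++ y :: B) =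
  cycle_parity d (x :: rcons A y) (+) cycle_parity d (y :: rcons B x).
Proof.
rewrite /= rcons_cat walk_parity_cat /= !walk_parity_rcons !last_rcons (d_sym y x).
by rewrite addbACA addbb addbF !addbA.
Qed.

End Parity.

Lemma walk_parity_fpath (T : eqType) (d : rel T) (f : T -> T) x p :
  fpath f x p -> walk_parity d x p = odd (count (fun z => d z (f z)) (belast x p)).
Proof. by elim: p x => [|y p IH] x //= /andP [/eqP <- /IH ->]; rewrite oddD oddb. Qed.

Lemma cycle_parity_count (T : eqType) (d : rel T) c :
  uniq c -> cycle_parity d c = odd (count (fun x => d x (next c x)) c).
Proof.
case: c => [|x q] // c_uniq.
by rewrite /= (walk_parity_fpath d (cycle_next c_uniq)) belast_rcons.
Qed.

Definition edge_in (V : finType) (S : {set V * V}) (a b : V) : bool :=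
  ((a, b) \in S) || ((b, a) \in S).

Lemma edge_in_sym (V : finType) (S : {set V * V}) : symmetric (edge_in S).
Proof. by move=> a b; rewrite /edge_in orbC. Qed.

Lemma sigma_qE (V : finType) (arr : rel V) (S : {set V * V}) a b :
  sigma_q arr S (a, b) = if adj arr a b then Some (edge_in S a b) else None.
Proof. by rewrite ffunE. Qed.

Lemma odd_cycle_count (V : finType) (S : {set V * V}) c :
  uniq c -> odd (cycle_count S c) = cycle_parity (edge_in S) c.
Proof. by move=> c_uniq; rewrite cycle_parity_count. Qed.

Lemma cycle_split_repeat (T : Type) (e : rel T) w M N :
  cycle e (w :: M ++ w :: N) -> cycle e (w :: M) /\ cycle e (w :: N).
Proof. by rewrite /= rcons_cat cat_path /= !rcons_path => /and4P [-> -> -> ->]. Qed.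

Lemma cycle_split_chord (T : Type) (e : rel T) x A y B :
  symmetric e -> e x y -> cycle e (x :: A ++ y :: B) ->
  cycle e (x :: rcons A y) /\ cycle e (y :: rcons B x).
Proof.
move=> e_sym exy.
rewrite /= rcons_cat cat_path !rcons_path /= !last_rcons (e_sym y x) exy.
by case/and3P=> -> /andP [-> ->] ->.
Qed.

Lemma size_split_repeat (T : Type) (w : T) M N :
  size (w :: M) < size (w :: M ++ w :: N) /\ size (w :: N) < size (w :: M ++ w :: N).
Proof. by rewrite /= size_cat /=; split; lia. Qed.

Lemma size_split_chord (T : Type) (x y : T) A B :
  0 < size A -> 0 < size B ->
  size (x :: rcons A y) < size (x :: A ++ y :: B) /\
  size (y :: rcons B x) < size (x :: A ++ y :: B).
Proof. by rewrite /= size_cat /= !size_rcons; split; lia. Qed.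

Lemma not_uniq_split (T : eqType) (c : seq T) :
  ~~ uniq c -> exists P w M N, c = P ++ w :: M ++ w :: N.
Proof.
elim: c => [|x c IH] //=; rewrite negb_and negbK => /orP [/splitPr [M N]|].
  by exists [::], x, M, N.
by case/IH=> P [w [M [N ->]]]; exists (x :: P), w, M, N.
Qed.

Lemma chord_split (T : eqType) (c : seq T) x y :
  uniq c -> x \in c -> y \in c -> x != y -> y != next c x -> x != next c y ->
  exists i A B, [/\ rot i c = x :: A ++ y :: B, 0 < size A & 0 < size B].
Proof.
move=> c_uniq xc yc xy nxy nyx.
case: (rot_to_arc c_uniq xc yc xy) => i A B _ _ E; exists i, A, B.
have c_next : next (x :: A ++ y :: B) =1 next c by rewrite -E; apply: next_rot.
split=> //; rewrite lt0n size_eq0.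
  by apply: contraNneq nxy => A0; rewrite -c_next A0 /= eqxx.
apply: contraNneq nyx => B0; rewrite -c_next B0 -(next_rot (size (x :: A))).
  by rewrite rot_size_cat /= eqxx.
by rewrite -B0 -E rot_uniq.
Qed.

Lemma adj_sym (V : finType) (arr : rel V) : symmetric (adj arr).
Proof. by move=> x y; rewrite /adj orbC. Qed.

Lemma full_or_chord (V : finType) (arr : rel V) c :
  full_cycle arr c \/
  exists x y, [/\ x \in c, y \in c, adj arr x y, y != next c x & x != next c y].
Proof.
have [full|] := boolP [forall x, forall y,
  [&& x \in c, y \in c & adj arr x y] ==> (y == next c x) || (x == next c y)].
  by left=> x y xc yc xy; move/forallP/(_ x)/forallP/(_ y): full; rewrite xc yc xy.
rewrite negb_forall => /existsP [x]; rewrite negb_forall => /existsP [y].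
rewrite negb_imply negb_or => /andP [/and3P [xc yc xy] /andP [nxy nyx]].
by right; exists x, y.
Qed.

Section FullCycles.

Variables (V : finType) (arr : rel V) (d : rel V).
Hypothesis arr_irr : forall x, ~~ arr x x.
Hypothesis d_sym : symmetric d.
Hypothesis full_even :
  forall c, is_cycle arr c -> full_cycle arr c -> cycle_parity d c = false.

Lemma adj_irr x : adj arr x x = false.
Proof. by rewrite /adj orbb (negbTE (arr_irr x)). Qed.

Lemma cycle_parity_short c :
  size c <= 2 -> cycle (adj arr) c -> cycle_parity d c = false.
Proof.
case: c => [|x [|y [|z c]]] //=; first by rewrite adj_irr.
by rewrite d_sym addbF addbb.
Qed.

Lemma cycle_parity_adj c : cycle (adj arr) c -> cycle_parity d c = false.
Proof.
move: {2}(size c).+1 (ltnSn (size c)) => n.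
elim: n c => // n IH c; rewrite ltnS => c_size c_cycle.
have IHc c' : size c' < size c -> cycle (adj arr) c' -> cycle_parity d c' = false.
  by move=> lt_c'; apply: IH; apply: leq_trans c_size.
have [c_uniq|/not_uniq_split [P [w [M [N c_eq]]]]] := boolP (uniq c); last first.
  have c_rot : rot (size P) c = w :: M ++ w :: (N ++ P).
    by rewrite c_eq rot_size_cat /= -catA.
  rewrite -(cycle_parity_rot d (size P)) c_rot cycle_parity_repeat.
  rewrite -(rot_cycle (size P)) c_rot in c_cycle.
  have [cyc1 cyc2] := cycle_split_repeat c_cycle.
  have [lt1 lt2] := size_split_repeat w M (N ++ P).
  by rewrite !IHc // -(size_rot (size P) c) c_rot.
have [short|long] := leqP (size c) 2; first exact: cycle_parity_short.
have [full|[x [y [xc yc xy nxy nyx]]]] := full_or_chord arr c.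
  exact: full_even.
have x_neq_y : x != y by apply: contraTneq xy => ->; rewrite adj_irr.
have [i [A [B [c_rot A_gt0 B_gt0]]]] := chord_split c_uniq xc yc x_neq_y nxy nyx.
rewrite -(cycle_parity_rot d i) c_rot cycle_parity_chord //.
rewrite -(rot_cycle i) c_rot in c_cycle.
have [cyc1 cyc2] := cycle_split_chord (@adj_sym V arr) xy c_cycle.
have [lt1 lt2] := size_split_chord x y A_gt0 B_gt0.
by rewrite !IHc // -(size_rot i c) c_rot.
Qed.

End FullCycles.

Section Potential.

Variables (V : finType) (e d : rel V).
Hypothesis e_sym : symmetric e.
Hypothesis d_sym : symmetric d.
Hypothesis balanced : forall c, cycle e c -> cycle_parity d c = false.

Lemma walk_parity_closed x p : path e x p -> last x p = x -> walk_parity d x p = false.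
Proof.
case/lastP: p => [|q y] // x_path; rewrite last_rcons => y_eq_x.
by rewrite y_eq_x in x_path *; apply: (balanced (c := x :: q)).
Qed.

Lemma walk_parity_same_end r p1 p2 :
  path e r p1 -> path e r p2 -> last r p1 = last r p2 ->
  walk_parity d r p1 = walk_parity d r p2.
Proof.
move=> path1 path2 same_last.
have back_path : path e (last r p2) (rev (belast r p2)).
  by rewrite rev_path (eq_path (e' := e)) // => a b; apply: e_sym.
have := walk_parity_closed (x := r) (p := p1 ++ rev (belast r p2)).
rewrite cat_path path1 same_last back_path last_cat same_last.
rewrite -(last_cons r) -rev_rcons -lastI rev_cons last_rcons => /(_ isT erefl).
by rewrite walk_parity_cat same_last walk_parity_rev // -negb_eqb => /negbFE/eqP.
Qed.

Lemma balanced_potential :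
  exists X : {set V}, forall x y, e x y -> (x \in X) (+) (y \in X) = d x y.
Proof.
have e_csym : connect_sym e := sym_connect_sym e_sym.
have /all_sig [p pP] v : {p | path e (root e v) p && (last (root e v) p == v)}.
  apply: sigW; have /connectP [p p_path v_last] : connect e (root e v) v.
    by rewrite e_csym connect_root.
  by exists p; rewrite p_path -v_last eqxx.
exists [set v | walk_parity d (root e v) (p v)] => x y xy; rewrite !inE.
have /(rootP e_csym) root_eq : connect e x y by apply: connect1.
case/andP: (pP x) (pP y) => [x_path /eqP x_last] /andP [y_path /eqP y_last].
rewrite root_eq in x_path x_last *.
have xy_path : path e (root e y) (rcons (p x) y) by rewrite rcons_path x_path x_last.
rewrite -(walk_parity_same_end xy_path y_path) ?last_rcons ?y_last //.
by rewrite walk_parity_rcons x_last addbA addbb.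
Qed.

End Potential.

Lemma avoid_switching_set (T : finType) (X : {set T}) (v : T) :
  exists2 Y : {set T}, v \notin Y &
    forall x y, (x \in Y) (+) (y \in Y) = (x \in X) (+) (y \in X).
Proof.
have [vX|vX] := boolP (v \in X); last by exists X.
by exists (~: X) => [|x y]; rewrite !inE ?vX // addbN addNb negbK.
Qed.

Lemma sign_changesE (V : finType) s (G : signed_graph V) p :
  sign_changes s G p =
  if odd (count (fun i => (p.1 == i) || (p.2 == i)) s) then omap negb (G p) else G p.
Proof.
elim: s G => [|i s IH] G //=.
rewrite /sign_changes /= -/(sign_changes s _) IH ffunE oddD oddb.
by case: ((p.1 == i) || (p.2 == i)); case: (odd _) => //=; case: (G p) => [[]|].
Qed.

Lemma odd_count_eq2 (T : eqType) (a b : T) s :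
  uniq s -> a != b ->
  odd (count (fun i => (a == i) || (b == i)) s) = (a \in s) (+) (b \in s).
Proof.
move=> + a_neq_b; elim: s => [|i s IH] //= /andP [i_notin s_uniq].
rewrite oddD oddb IH // !inE.
have [ai|ai] := eqVneq a i; have [bi|bi] := eqVneq b i => //=.
- by rewrite ai bi eqxx in a_neq_b.
- by rewrite ai (negbTE i_notin).
- by rewrite bi (negbTE i_notin) addbF addbT.
Qed.

Lemma sign_changes_enum (V : finType) (A : {set V}) (G : signed_graph V) p :
  p.1 != p.2 ->
  sign_changes (enum A) G p =
  if (p.1 \in A) (+) (p.2 \in A) then omap negb (G p) else G p.
Proof. by move=> p_neq; rewrite sign_changesE odd_count_eq2 ?enum_uniq // !mem_enum. Qed.

Lemma sign_changes_sigma_q (V : finType) (arr : rel V) (S S' : {set V * V})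
    (X : {set V}) :
  (forall x, ~~ arr x x) ->
  (forall x y, adj arr x y ->
     (x \in X) (+) (y \in X) = edge_in S x y (+) edge_in S' x y) ->
  sign_changes (enum X) (sigma_q arr S) = sigma_q arr S'.
Proof.
move=> arr_irr X_switch; apply/ffunP => -[a b].
case ab: (adj arr a b); last by rewrite sign_changesE !sigma_qE ab; case: ifP.
have a_neq_b : a != b by apply: contraTneq ab => ->; rewrite adj_irr.
rewrite sign_changes_enum //= !sigma_qE ab X_switch //.
by case: (edge_in S a b); case: (edge_in S' a b).
Qed.

Theorem lemma6p2 (V : finType) (arr : rel V) (S S' : {set V * V}) :
  cluster_quiver arr ->
  (forall c, is_cycle arr c -> full_cycle arr c -> oriented_cycle arr c) ->
  arrow_set arr S -> arrow_set arr S' -> S != S' ->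
  (forall c, is_cycle arr c -> full_cycle arr c ->
     odd (cycle_count S c) = odd (cycle_count S' c)) ->
  exists s : seq V,
    [/\ uniq s, size s < #|V| & sign_changes s (sigma_q arr S) = sigma_q arr S'].
Proof.
move=> [arr_irr _] _ _ _ S_neq_S' same_parity.
pose d a b := edge_in S a b (+) edge_in S' a b.
have d_sym : symmetric d by move=> a b; rewrite /d edge_in_sym (edge_in_sym S').
have balanced c : cycle (adj arr) c -> cycle_parity d c = false.
  apply: (cycle_parity_adj arr_irr d_sym) => {}c c_cycle c_full.
  have [c_uniq _] := c_cycle.
  by rewrite cycle_parity_addb -!odd_cycle_count // same_parity ?addbb.
have [X X_switch] := balanced_potential (@adj_sym V arr) d_sym balanced.
have v0 : V.
  case: (pickP (@predT V)) => [v0 _|no_vertex]; first exact: v0.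
  by case/negP: S_neq_S'; apply/eqP/setP => -[x y]; have := no_vertex x.
have [Y v0_notin_Y Y_switch] := avoid_switching_set X v0.
exists (enum Y); split; first exact: enum_uniq.
  rewrite -cardE -cardsT; apply: proper_card; apply/properP.
  by split; [exact: subsetT | exists v0].
by apply: sign_changes_sigma_q arr_irr _ => x y xy; rewrite Y_switch X_switch.
Qed.
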